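(* Let $S>0$, let $I\ge 1$, let $N_1,\dots,N_I$ be positive integers and let $\theta_1>\theta_2>\dots>\theta_I>0$. Consider the complete price differentiation problem $$\max_{\{p_i>0,\ s_i\ge 0,\ n_i\}_{i=1}^I}\ \sum_{i=1}^I n_i p_i s_i\quad\text{s.t.}\quad s_i=\Big(\frac{\theta_i}{p_i}-1\Big)^+,\ \ n_i\in\{0,1,\dots,N_i\}\ (i=1,\dots,I),\quad \sum_{i=1}^I n_i s_i\le S,$$ where $(x)^+=\max(x,0)$. For $k\in\{1,\dots,I\}$ let $\lambda(k)=\Big(\frac{\sum_{i=1}^k N_i\sqrt{\theta_i}}{S+\sum_{i=1}^k N_i}\Big)^2$, let $K^{cp}=\max\{k\in\{1,\dots,I\}:\theta_k>\lambda(k)\}$ (this set contains $k=1$), and let $\lambda^*=\lambda(K^{cp})$. Then this problem has an optimal solution in which $n_i=N_i$ for all $i$, $$s_i=\sqrt{\theta_i/\lambda^*}-1,\ \ p_i=\sqrt{\theta_i\lambda^*}\quad\text{for } i=1,\dots,K^{cp},$$ and $s_i=0$, $p_i=\theta_i$ for $i=K^{cp}+1,\dots,I$.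
   Context: Each user of group $i$ has utility $\theta_i\ln(1+s)$ for $s$ units of resource; a user facing unit price $p_i$ demands the surplus-maximizing quantity $(\theta_i/p_i-1)^+$. The service provider with total resource $S$ chooses a price $p_i$ and a number $n_i$ of admitted users for each group $i$ to maximize revenue. *)

From mathcomp Require Import all_boot all_order all_algebra.
Set Implicit Arguments. Unset Strict Implicit. Unset Printing Implicit Defensive.
Import Order.TTheory GRing.Theory Num.Theory.
Local Open Scope ring_scope.

Section CPD.
Variable R : rcfType.

Definition posp (x : R) : R := Num.max x 0.

Definition demand (theta p : R) : R := posp (theta / p - 1).

Definition cp_feasible (I : nat) (S : R) (N : nat -> nat) (theta : nat -> R)
  (p s : nat -> R) (n : nat -> nat) : Prop :=
  (forall i, (1 <= i <= I)%N ->
     [/\ 0 < p i, 0 <= s i, s i = demand (theta i) (p i) & (n i <= N i)%N])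
  /\ \sum_(1 <= i < I.+1) (n i)%:R * s i <= S.

Definition cp_revenue (I : nat) (p s : nat -> R) (n : nat -> nat) : R :=
  \sum_(1 <= i < I.+1) (n i)%:R * p i * s i.

Definition cp_optimal (I : nat) (S : R) (N : nat -> nat) (theta : nat -> R)
  (p s : nat -> R) (n : nat -> nat) : Prop :=
  cp_feasible I S N theta p s n /\
  forall p' s' n', cp_feasible I S N theta p' s' n' ->
    cp_revenue I p' s' n' <= cp_revenue I p s n.

Definition cp_lambda (S : R) (N : nat -> nat) (theta : nat -> R) (k : nat) : R :=
  ((\sum_(1 <= i < k.+1) (N i)%:R * Num.sqrt (theta i))
    / (S + \sum_(1 <= i < k.+1) (N i)%:R)) ^+ 2.

Definition Kcp (I : nat) (S : R) (N : nat -> nat) (theta : nat -> R) : nat :=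
  \max_(1 <= k < I.+1 | cp_lambda S N theta k < theta k) k.

End CPD.

From mathcomp Require Import all_boot all_order all_algebra.
From mathcomp Require Import ring lra.
Import Order.TTheory GRing.Theory Num.Theory.

Set Implicit Arguments.
Unset Strict Implicit.
Unset Printing Implicit Defensive.
Local Open Scope ring_scope.

(* Price the resource at lambda = lambda(K). Against that price, a group-i user
   facing any unit price q yields q d(q) <= ((sqrt theta_i - sqrt lambda)^+)^2
   + lambda d(q), with equality at q = sqrt (theta_i lambda) when theta_i > lambda
   and at q = theta_i otherwise. Summing over users and using the capacity
   constraint bounds every feasible revenue by
   sum_i N_i ((sqrt theta_i - sqrt lambda)^+)^2 + lambda S. The mediant
   inequality turns the maximality of K into "theta_i > lambda iff i <= K", and
   the definition of lambda(K) makes the resulting demands use up exactly S, so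
   the shadow-price allocation attains the bound. *)

Lemma bigmax_nat_cond_spec (P : pred nat) n : (1 <= n)%N -> P 1%N ->
  let M := (\max_(1 <= k < n.+1 | P k) k)%N in
  [/\ (1 <= M <= n)%N, P M & forall k, (M < k <= n)%N -> ~~ P k].
Proof.
move=> n_ge1 P1 M.
have le_M k : (1 <= k <= n)%N -> P k -> (k <= M)%N.
  by move=> k_in Pk; apply: (leq_bigmax_seq k) => //; rewrite mem_index_iota.
have M_le : (M <= n)%N.
  by apply/bigmax_leqP_seq => k; rewrite mem_index_iota => /andP[_].
have M_ge1 : (1 <= M)%N by apply: le_M; rewrite ?leqnn.
(* a max over indices is one of them, or the empty max 0 *)
have PM : (M == 0)%N || P M.
  rewrite /M; elim/big_ind: _ => [//|x y Qx Qy|k ->]; last by rewrite orbT.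
  by rewrite /maxn; case: ifP.
split=> [||k /andP[M_lt k_le]]; first by rewrite M_ge1.
  by move: PM; rewrite eqn0Ngt M_ge1.
have k_ge1 := leq_trans M_ge1 (ltnW M_lt).
by apply: contraL M_lt => Pk; rewrite -leqNgt le_M ?k_ge1.
Qed.

Lemma ler_mediant (R : numFieldType) (A B n x : R) : 0 < B -> 0 <= n ->
  x <= (A + n * x) / (B + n) -> x <= A / B.
Proof.
move=> B_gt0 n_ge0; have Bn_gt0 : 0 < B + n by rewrite ltr_wpDr.
by rewrite !ler_pdivlMr // mulrDr [n * x]mulrC lerD2r.
Qed.

Section ShadowPrice.
Variable R : rcfType.
Implicit Types lam theta q : R.

(* sup over q > 0 of (q - lam) * demand theta q, attained at [shadow_price lam theta] *)
Definition dual_gain lam theta : R := posp (Num.sqrt theta - Num.sqrt lam) ^+ 2.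

Definition shadow_price lam theta : R :=
  if lam < theta then Num.sqrt (theta * lam) else theta.

Lemma posp_id {x : R} : 0 <= x -> posp x = x.
Proof. exact: max_l. Qed.

Lemma posp_eq0 {x : R} : x <= 0 -> posp x = 0.
Proof. exact: max_r. Qed.

Lemma demand_ge0 theta q : 0 <= demand theta q.
Proof. by rewrite /demand /posp le_max lexx orbT. Qed.

Lemma revenue_le_dual lam theta q : 0 <= lam -> 0 <= theta -> 0 < q ->
  q * demand theta q <= dual_gain lam theta + lam * demand theta q.
Proof.
move=> lam_ge0 theta_ge0 q_gt0; rewrite -lerBlDr -mulrBl /dual_gain /demand.
have [d_le0|d_gt0] := lerP (theta / q - 1) 0.
  by rewrite (posp_eq0 d_le0) mulr0 sqr_ge0.
rewrite (posp_id (ltW d_gt0)); set d := theta / q - 1 in d_gt0 *.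
have theta_qd : theta = q * (d + 1) by rewrite /d subrK mulrC divfK ?gt_eqF.
set a := Num.sqrt theta; set m := Num.sqrt lam.
have a_ge0 : 0 <= a := sqrtr_ge0 theta; have m_ge0 : 0 <= m := sqrtr_ge0 lam.
have a_qd : a ^+ 2 = q * (d + 1) by rewrite sqr_sqrtr.
rewrite -[lam]sqr_sqrtr // -/m; clearbody a m d; clear theta_qd.
have [am_le0|am_gt0] := lerP (a - m) 0.
  rewrite (posp_eq0 am_le0) expr0n /= mulr_le0_ge0 ?(ltW d_gt0) // subr_le0.
  (* a positive demand needs a price below a^2 <= m^2 *)
  nra.
rewrite (posp_id (ltW am_gt0)) -subr_ge0 -(pmulr_rge0 _ q_gt0).
(* AM-GM for q and a^2 m^2 / q *)
have -> : q * ((a - m) ^+ 2 - (q - m ^+ 2) * d) = (q - a * m) ^+ 2.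
  have qd : q * d = a ^+ 2 - q by rewrite a_qd; ring.
  transitivity (q * (a - m) ^+ 2 - (q - m ^+ 2) * (q * d)); first by ring.
  rewrite qd; ring.
exact: sqr_ge0.
Qed.

Lemma shadow_price_gt0 lam theta : 0 < lam -> 0 < theta -> 0 < shadow_price lam theta.
Proof.
by move=> lam_gt0 theta_gt0; rewrite /shadow_price; case: ifP; rewrite ?sqrtr_gt0 ?mulr_gt0.
Qed.

Lemma demand_shadow_price lam theta : 0 < lam -> 0 < theta ->
  demand theta (shadow_price lam theta) =
  if lam < theta then Num.sqrt (theta / lam) - 1 else 0.
Proof.
move=> lam_gt0 theta_gt0; rewrite /shadow_price /demand; case: ifP => [lt_lam|_]; last first.
  by rewrite divff ?gt_eqF // subrr posp_id.
have a_gt0 : 0 < Num.sqrt theta by rewrite sqrtr_gt0.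
have m_gt0 : 0 < Num.sqrt lam by rewrite sqrtr_gt0.
have m_lt_a : Num.sqrt lam < Num.sqrt theta by rewrite ltr_sqrt.
rewrite !sqrtrM ?sqrtrV ?(ltW theta_gt0) ?(ltW lam_gt0) //.
have -> : theta / (Num.sqrt theta * Num.sqrt lam) = Num.sqrt theta / Num.sqrt lam.
  by rewrite -[theta in theta / _](sqr_sqrtr (ltW theta_gt0)); field; rewrite !gt_eqF.
by rewrite posp_id // subr_ge0 ler_pdivlMr // mul1r ltW.
Qed.

Lemma revenue_shadow_price lam theta : 0 < lam -> 0 < theta ->
  shadow_price lam theta * demand theta (shadow_price lam theta) =
  dual_gain lam theta + lam * demand theta (shadow_price lam theta).
Proof.
move=> lam_gt0 theta_gt0; rewrite demand_shadow_price // /dual_gain /shadow_price.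
case: ifP => [lt_lam|/negbT]; last first.
  rewrite -leNgt -ler_sqrt ?(ltW lam_gt0) // -subr_le0 => /posp_eq0->.
  by rewrite !mulr0 expr0n addr0.
have m_gt0 : 0 < Num.sqrt lam by rewrite sqrtr_gt0.
have m_lt_a : Num.sqrt lam < Num.sqrt theta by rewrite ltr_sqrt.
rewrite posp_id ?subr_ge0 ?(ltW m_lt_a) //.
rewrite !sqrtrM ?sqrtrV ?(ltW theta_gt0) ?(ltW lam_gt0) //.
set m := Num.sqrt lam; rewrite -[lam](sqr_sqrtr (ltW lam_gt0)) -/m.
by field; rewrite gt_eqF.
Qed.

End ShadowPrice.

Section LagrangianBound.
Variables (R : rcfType) (I : nat) (S : R) (N : nat -> nat) (theta : nat -> R) (lam : R).
Hypotheses (lam_gt0 : 0 < lam) (theta_gt0 : forall i, (1 <= i <= I)%N -> 0 < theta i).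

Lemma cp_revenue_le_dual p s n : cp_feasible I S N theta p s n ->
  cp_revenue I p s n <=
  \sum_(1 <= i < I.+1) (N i)%:R * dual_gain lam (theta i) + lam * S.
Proof.
move=> [feas supply]; apply: (@le_trans _ _ (\sum_(1 <= i < I.+1)
    ((n i)%:R * dual_gain lam (theta i) + lam * ((n i)%:R * s i)))).
  apply: ler_sum_nat => i /[dup] /theta_gt0 theta_i_gt0 /feas [p_gt0 _ -> _].
  rewrite -mulrA [lam * _]mulrCA -mulrDr ler_wpM2l //.
  exact: revenue_le_dual (ltW lam_gt0) (ltW theta_i_gt0) p_gt0.
rewrite big_split /= -mulr_sumr; apply: lerD; last by rewrite ler_pM2l.
apply: ler_sum_nat => i /feas [_ _ _ n_le_N].
by apply: ler_wpM2r; rewrite ?sqr_ge0 ?ler_nat.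
Qed.

Lemma cp_optimal_shadow_price :
  \sum_(1 <= i < I.+1) (N i)%:R * demand (theta i) (shadow_price lam (theta i)) = S ->
  cp_optimal I S N theta (fun i => shadow_price lam (theta i))
    (fun i => demand (theta i) (shadow_price lam (theta i))) N.
Proof.
move=> clearing; split.
  split=> [i /theta_gt0 theta_i_gt0|]; last by rewrite clearing.
  by split; rewrite ?shadow_price_gt0 ?demand_ge0.
have -> : cp_revenue I (fun i => shadow_price lam (theta i))
    (fun i => demand (theta i) (shadow_price lam (theta i))) N =
    \sum_(1 <= i < I.+1) (N i)%:R * dual_gain lam (theta i) + lam * S.
  rewrite /cp_revenue -clearing mulr_sumr -big_split /=.
  apply: eq_big_nat => i /theta_gt0 theta_i_gt0.
  by rewrite -mulrA revenue_shadow_price // mulrDr [_ * (lam * _)]mulrCA.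
exact: cp_revenue_le_dual.
Qed.

End LagrangianBound.

Section WaterLevel.
Variables (R : rcfType) (S : R) (I : nat) (N : nat -> nat) (theta : nat -> R).
Hypotheses (S_gt0 : 0 < S) (I_ge1 : (1 <= I)%N)
  (N_gt0 : forall i, (1 <= i <= I)%N -> (0 < N i)%N)
  (theta_decr : forall i, (1 <= i)%N -> (i < I)%N -> theta i.+1 < theta i)
  (theta_I_gt0 : 0 < theta I).

Lemma theta_antitone i j : (1 <= i)%N -> (i <= j <= I)%N -> theta j <= theta i.
Proof.
move=> i_ge1 /andP[le_ij j_le].
have := @homo_leq_in _ [pred k | (1 <= k <= I)%N] theta (fun x y => y <= x).
apply=> //.
- by move=> y x z le_yx le_zy; apply: le_trans le_zy le_yx.
- move=> a b /andP[a1 _] /andP[_ bI] k /andP[ak kb].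
  by rewrite inE (leq_trans a1 (ltnW ak)) (leq_trans (ltnW kb) bI).
- by move=> k /andP[k1 _] /andP[_ kI]; rewrite ltW // theta_decr.
- by rewrite inE i_ge1 (leq_trans le_ij j_le).
- by rewrite inE j_le (leq_trans i_ge1 le_ij).
Qed.

Lemma theta_gt0 i : (1 <= i <= I)%N -> 0 < theta i.
Proof.
move=> /andP[i1 iI]; apply: lt_le_trans theta_I_gt0 (theta_antitone i1 _).
by rewrite iI leqnn.
Qed.

(* [level k] is sqrt lambda(k), the price of resource when groups 1..k are served *)
Let num k : R := \sum_(1 <= i < k.+1) (N i)%:R * Num.sqrt (theta i).
Let den k : R := S + \sum_(1 <= i < k.+1) (N i)%:R.
Let level k := num k / den k.

Let den_gt0 k : 0 < den k.
Proof. by rewrite ltr_wpDr ?sumr_ge0. Qed.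

Let level_ge0 k : 0 <= level k.
Proof.
apply: divr_ge0; last exact: ltW.
by apply: sumr_ge0 => i _; rewrite mulr_ge0 ?sqrtr_ge0.
Qed.

Lemma cp_lambda_lt_theta k i : (1 <= i <= I)%N ->
  (cp_lambda S N theta k < theta i) = (level k < Num.sqrt (theta i)).
Proof.
by move=> /theta_gt0 theta_i_gt0; rewrite -ltr_sqrt // sqrtr_sqr ger0_norm ?level_ge0.
Qed.

Lemma cp_lambda1_lt_theta1 : cp_lambda S N theta 1 < theta 1.
Proof.
have I1 : (1 <= 1 <= I)%N by rewrite I_ge1.
rewrite cp_lambda_lt_theta // /level /num /den !big_nat1.
have a_gt0 : 0 < Num.sqrt (theta 1) by rewrite sqrtr_gt0 theta_gt0.
have N1_gt0 : 0 < (N 1)%:R :> R by rewrite ltr0n N_gt0.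
by rewrite ltr_pdivrMr ?addr_gt0 // mulrDr mulrC ltr_pwDl ?mulr_gt0.
Qed.

Local Notation K := (Kcp I S N theta).

Lemma Kcp_spec : [/\ (1 <= K <= I)%N, cp_lambda S N theta K < theta K &
  forall k, (K < k <= I)%N -> theta k <= cp_lambda S N theta k].
Proof.
have [K_in lt_K notP] := bigmax_nat_cond_spec
  (P := fun k => cp_lambda S N theta k < theta k) I_ge1 cp_lambda1_lt_theta1.
by split=> // k /notP; rewrite -leNgt.
Qed.

Lemma theta_le_cp_lambda k : (k < I)%N ->
  theta k.+1 <= cp_lambda S N theta k.+1 -> theta k.+1 <= cp_lambda S N theta k.
Proof.
move=> k_lt; have k1_in : (1 <= k.+1 <= I)%N by [].
rewrite !leNgt !cp_lambda_lt_theta // -!leNgt => le_next.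
have Nk1_ge0 : 0 <= (N k.+1)%:R :> R by rewrite ler0n.
apply: ler_mediant (den_gt0 k) Nk1_ge0 _.
by move: le_next; rewrite /level /num /den !(big_nat_recr k.+1) //= addrA.
Qed.

Lemma Kcp_threshold i : (1 <= i <= I)%N -> (cp_lambda S N theta K < theta i) = (i <= K)%N.
Proof.
move=> /andP[i_ge1 i_le]; have [/andP[_ K_le] lt_K le_after] := Kcp_spec.
have [le_iK|lt_Ki] := leqP i K.
  by apply: lt_le_trans lt_K (theta_antitone i_ge1 _); rewrite le_iK.
apply/negbTE; rewrite -leNgt; have K_lt : (K < I)%N := leq_trans lt_Ki i_le.
apply: le_trans (theta_antitone (ltn0Sn K) _) _; first by rewrite lt_Ki.
by apply: theta_le_cp_lambda => //; apply: le_after; rewrite ltnSn.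
Qed.

Lemma cp_lambda_Kcp_gt0 : 0 < cp_lambda S N theta K.
Proof.
have [/andP[K_ge1 _] _ _] := Kcp_spec; have I1 : (1 <= 1 <= I)%N by rewrite I_ge1.
rewrite exprn_gt0 // divr_gt0 ?den_gt0 // big_ltn // ltr_pwDl ?sumr_ge0 //.
  by rewrite mulr_gt0 ?ltr0n ?N_gt0 ?sqrtr_gt0 ?theta_gt0.
by move=> i _; rewrite mulr_ge0 ?sqrtr_ge0.
Qed.

Lemma Kcp_market_clearing : \sum_(1 <= i < I.+1)
  (N i)%:R * demand (theta i) (shadow_price (cp_lambda S N theta K) (theta i)) = S.
Proof.
have [/andP[K_ge1 K_le] _ _] := Kcp_spec; have lam_gt0 := cp_lambda_Kcp_gt0.
have sqrt_lam : Num.sqrt (cp_lambda S N theta K) = level K.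
  by rewrite sqrtr_sqr ger0_norm ?level_ge0.
have level_gt0 : 0 < level K by rewrite -sqrt_lam sqrtr_gt0.
rewrite (big_cat_nat _ (n := K.+1)) //= [X in _ + X]big_nat_cond [X in _ + X]big1 ?addr0;
  last first.
  move=> i /andP[/andP[lt_Ki]]; rewrite ltnS => i_le _; have i_in : (1 <= i <= I)%N.
    by rewrite i_le (leq_trans K_ge1 (ltnW lt_Ki)).
  by rewrite demand_shadow_price ?theta_gt0 // Kcp_threshold // leqNgt lt_Ki mulr0.
rewrite (eq_big_nat _ _ (F2 := fun i => (N i)%:R * Num.sqrt (theta i) / level K - (N i)%:R));
  last first.
  move=> i /andP[i_ge1]; rewrite ltnS => i_le; have i_in : (1 <= i <= I)%N.
    by rewrite i_ge1 (leq_trans i_le K_le).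
  rewrite demand_shadow_price ?theta_gt0 // Kcp_threshold // i_le.
  by rewrite sqrtrM ?sqrtrV ?ltW ?theta_gt0 // sqrt_lam mulrBr mulr1 mulrA.
have num_gt0 : 0 < num K by move: level_gt0; rewrite pmulr_lgt0 ?invr_gt0.
rewrite sumrB -mulr_suml -[X in X / level K]/(num K) invf_div mulrCA divff ?gt_eqF //.
by rewrite mulr1 addrK.
Qed.

End WaterLevel.

Theorem theorem1 (R : rcfType) (S : R) (I : nat) (N : nat -> nat)
  (theta : nat -> R) :
  0 < S -> (1 <= I)%N ->
  (forall i, (1 <= i <= I)%N -> (0 < N i)%N) ->
  (forall i, (1 <= i)%N -> (i < I)%N -> theta i.+1 < theta i) ->
  0 < theta I ->
  let K := Kcp I S N theta in
  let lam := cp_lambda S N theta K in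
  exists (p s : nat -> R) (n : nat -> nat),
    cp_optimal I S N theta p s n /\
    forall i, (1 <= i <= I)%N ->
      [/\ n i = N i,
          (i <= K)%N -> s i = Num.sqrt (theta i / lam) - 1 /\
                        p i = Num.sqrt (theta i * lam)
        & (K < i)%N -> s i = 0 /\ p i = theta i].
Proof.
move=> S_gt0 I_ge1 N_gt0 theta_decr theta_I_gt0 K lam.
have lam_gt0 : 0 < lam := cp_lambda_Kcp_gt0 S_gt0 I_ge1 N_gt0 theta_decr theta_I_gt0.
have theta_pos := theta_gt0 theta_decr theta_I_gt0.
have threshold := Kcp_threshold S_gt0 I_ge1 N_gt0 theta_decr theta_I_gt0.
exists (fun i => shadow_price lam (theta i)),
  (fun i => demand (theta i) (shadow_price lam (theta i))), N; split.
  apply: cp_optimal_shadow_price lam_gt0 theta_pos _.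
  exact: Kcp_market_clearing S_gt0 I_ge1 N_gt0 theta_decr theta_I_gt0.
move=> i i_in; rewrite demand_shadow_price ?theta_pos // /shadow_price threshold //.
by split=> // [le_iK|lt_Ki]; rewrite ?le_iK // leqNgt lt_Ki.
Qed.
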